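(* Consider the complex-valued protocol. Let $\mathcal F$ be a Banach function space compactly embedded in $C(\mathbf X)$ and let $L,M\in[1,\infty)$ be such that $\mathcal H_\epsilon(U_{\mathcal F})\le L\log^M\frac1\epsilon$ for all $\epsilon\in(0,1/2]$. There exists a strategy for Predictor that guarantees, for all $N=2,3,\dots$, all $F\in\mathcal F$ and all moves of Reality, $$\sum_{n=1}^N|y_n-\mu_n|^2\le\sum_{n=1}^N|y_n-F(x_n)|^2+C_ML\left(\log^+\|F\|_{\mathcal F}+\log N\right)^M,$$ where $C_M$ is a constant depending only on $M$.
   Context: Complex-valued protocol: $\mathbf X$ a nonempty topological space; at each round $n$ Reality announces $x_n\in\mathbf X$, Predictor announces $\mu_n\in\mathbb C$, Reality announces $y_n\in\mathbb C$ with $|y_n|\le1$; a strategy for Predictor maps each history to $\mu_n$. $C(\mathbf X)$: bounded continuous complex-valued functions on $\mathbf X$ with the supremum norm. A Banach function space compactly embedded in $C(\mathbf X)$: a linear subspace $\mathcal F\subseteq C(\mathbf X)$ with a norm $\|\cdot\|_{\mathcal F}$ making it a Banach space whose unit ball $U_{\mathcal F}$ is compact in $C(\mathbf X)$. $\mathcal H_\epsilon(A)$: $\log_2$ of the minimal number of points of $A$ forming an $\epsilon$-net for $A$ in the supremum metric. $\log=\log_2$; $\log^+t=\log t$ if $t\ge1$ and $0$ otherwise. *)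

From HB Require Import structures.
From mathcomp Require Import all_boot all_order all_algebra.
From mathcomp Require Import all_classical all_reals all_analysis.
From mathcomp Require Import complex.
Set Implicit Arguments. Unset Strict Implicit. Unset Printing Implicit Defensive.
Import Order.TTheory GRing.Theory Num.Theory.
Import numFieldNormedType.Exports.
Local Open Scope classical_set_scope.
Local Open Scope ring_scope.

Section Defs.
Variable R : realType.

Definition cmod (z : R[i]) : R := ComplexField.Normc.normc z.

Definition log2 (t : R) : R := ln t / ln 2.
Definition logp (t : R) : R := if 1 <= t then log2 t else 0.

Variable X : topologicalType.

(* C(X): bounded continuous complex-valued functions on X
   (continuity of a complex-valued map = continuity of its real and
   imaginary parts, R[i] carrying the product topology of R x R) *)
Definition CX (f : X -> R[i]) : Prop :=
  continuous (fun x => complex.Re (f x) : R) /\ continuous (fun x => complex.Im (f x) : R) /\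
  exists B : R, forall x, cmod (f x) <= B.

Definition supdist (f g : X -> R[i]) : R :=
  sup [set cmod (f x - g x) | x in [set: X]].

Definition sup_open (O : set (X -> R[i])) : Prop :=
  O `<=` CX /\
  forall f, O f -> exists2 r : R, 0 < r &
    forall g, CX g -> supdist f g < r -> O g.

Definition sup_compact (K : set (X -> R[i])) : Prop :=
  K `<=` CX /\
  forall (I : Type) (O : I -> set (X -> R[i])),
    (forall i, sup_open (O i)) -> K `<=` \bigcup_(i in [set: I]) O i ->
    exists (n : nat) (g : 'I_n -> I), K `<=` \bigcup_(k in [set: 'I_n]) O (g k).

Definition banach_compact_embedded (Fs : set (X -> R[i]))
    (nF : (X -> R[i]) -> R) : Prop :=
  Fs `<=` CX /\
      Fs (fun _ => 0) /\
      (forall f g, Fs f -> Fs g -> Fs (fun x => f x + g x)) /\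
      (forall (a : R[i]) f, Fs f -> Fs (fun x => a * f x)) /\
      (forall f, Fs f -> 0 <= nF f /\ (nF f = 0 <-> f = (fun _ => 0))) /\
      (forall (a : R[i]) f, Fs f -> nF (fun x => a * f x) = cmod a * nF f) /\
      (forall f g, Fs f -> Fs g -> nF (fun x => f x + g x) <= nF f + nF g) /\
      (forall u : nat -> (X -> R[i]), (forall n, Fs (u n)) ->
         (forall e : R, 0 < e -> exists N, forall m n, (N <= m)%N -> (N <= n)%N ->
             nF (fun x => u m x - u n x) < e) ->
         exists2 f, Fs f & forall e : R, 0 < e -> exists N, forall n, (N <= n)%N ->
             nF (fun x => u n x - f x) < e) /\
      (* compact embedding: the unit ball is compact in C(X) *)
      sup_compact [set f | Fs f /\ nF f <= 1].

Definition unit_ball (Fs : set (X -> R[i])) (nF : (X -> R[i]) -> R) :=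
  [set f | Fs f /\ nF f <= 1].

Definition has_net (A : set (X -> R[i])) (eps : R) (n : nat) : Prop :=
  exists g : 'I_n -> (X -> R[i]),
    (forall k, A (g k)) /\ forall f, A f -> exists k, supdist f (g k) <= eps.

Definition entropy (A : set (X -> R[i])) (eps : R) : R :=
  log2 (inf [set (n%:R : R) | n in [set n | has_net A eps n]]).

(* strategies for Predictor: history of past (x_k, y_k) and current x_n *)
Definition strategy := seq (X * R[i]) -> X -> R[i].

(* Predictor's move at round n (rounds indexed from 0) *)
Definition pred_move (S : strategy) (x : nat -> X) (y : nat -> R[i]) (n : nat) :=
  S [seq (x k, y k) | k <- iota 0 n] (x n).

End Defs.

From HB Require Import structures.
From mathcomp Require Import all_boot all_order all_algebra.
From mathcomp Require Import all_classical all_reals all_analysis.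
From mathcomp Require Import complex.
From mathcomp Require Import ring lra zify.
Import Order.TTheory GRing.Theory Num.Theory.
Import numFieldNormedType.Exports.
Local Open Scope classical_set_scope.
Local Open Scope ring_scope.
Set Implicit Arguments. Unset Strict Implicit. Unset Printing Implicit Defensive.

(* Predictor runs Vovk's aggregating algorithm for the square loss on the
   square [-1, 1]^2, which is mixable at learning rate 1/64, over a countable
   pool of experts (t, k, i): from round t on, expert (t, k, i) predicts
   2^k g_(t,i) clipped to the square, where g_(t,0), ..., g_(t,s_t - 1) is a
   2^-(t+1)-net of the unit ball, and its prior weight is 1/s_t.  The loss of
   the master exceeds that of any expert by at most 64 ln (W / w), where
   W <= (N+1)^2 is the prior mass of the experts entered by round N and
   ln (1 / w) = ln s_t <= L (t+1)^M ln 2 by the entropy bound.  Choosing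
   2^k >= ||F|| and t = k + j with 2^j > N, the expert follows F within 1/(2N)
   per round, so its loss exceeds that of F by O(t) = O(log+ ||F|| + log N). *)

Section SquareLoss.
Variable R : realType.
Implicit Types (r : R) (a b z y m p : R[i]).

Lemma cmod_ge0 z : 0 <= cmod z.
Proof. by case: z => a b; rewrite /cmod /= sqrtr_ge0. Qed.

Lemma cmodD a b : cmod (a + b) <= cmod a + cmod b.
Proof. exact: le_normcD. Qed.

Lemma cmodB a b : cmod (a - b) = cmod (b - a).
Proof. by rewrite /cmod -normcN opprB. Qed.

Lemma cmodM a b : cmod (a * b) = cmod a * cmod b.
Proof. exact: ComplexField.Normc.normcM. Qed.

Lemma cmod_real r : cmod r%:C%C = `|r|.
Proof. by rewrite /cmod /= expr0n /= addr0 sqrtr_sqr. Qed.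

Lemma normr_Re_le_cmod z : `|complex.Re z| <= cmod z.
Proof.
by case: z => a b; rewrite /cmod /= -sqrtr_sqr ler_wsqrtr // lerDl sqr_ge0.
Qed.

Lemma normr_Im_le_cmod z : `|complex.Im z| <= cmod z.
Proof.
by case: z => a b; rewrite /cmod /= -sqrtr_sqr ler_wsqrtr // lerDr sqr_ge0.
Qed.

Definition sqloss y m : R :=
  (complex.Re y - complex.Re m) ^+ 2 + (complex.Im y - complex.Im m) ^+ 2.

Arguments sqloss : simpl never.

Definition in_square z : Prop := -1 <= complex.Re z <= 1 /\ -1 <= complex.Im z <= 1.

Lemma sqr_cmodB a b : cmod (a - b) ^+ 2 = sqloss a b.
Proof.
case: a b => [a1 a2] [b1 b2]; rewrite /cmod /sqloss /= sqr_sqrtr //.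
by rewrite addr_ge0 // sqr_ge0.
Qed.

Lemma cmod_le1_in_square z : cmod z <= 1 -> in_square z.
Proof.
move=> z1; split; rewrite -ler_norml.
  exact: le_trans (normr_Re_le_cmod z) z1.
exact: le_trans (normr_Im_le_cmod z) z1.
Qed.

Lemma sqloss_le8 y m : in_square y -> in_square m -> sqloss y m <= 8.
Proof.
move=> [/andP[? ?] /andP[? ?]] [/andP[? ?] /andP[? ?]]; rewrite /sqloss; nra.
Qed.

Lemma expR_neg_le_1B (s D : R) : s <= 2^-1 -> 2 * s ^+ 2 <= D ->
  expR (- (s + D)) <= 1 - s.
Proof.
move=> s_le D_ge; rewrite expRN -[X in X <= _]mul1r ler_pdivrMr ?expR_gt0 //.
have : 1 <= (1 - s) * (1 + (s + D)) by nra.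
move/le_trans; apply; apply: ler_wpM2l; first lra.
exact: expR_ge1Dx.
Qed.

(* The exponentiated square loss [exp (- sqloss y p / 64)] lies below its
   tangent at [p = m]: this is the mixability of the square loss on the square
   at learning rate 1/64. *)
Lemma expR_sqloss_tangent y m p : in_square y -> in_square m -> in_square p ->
  expR (- (sqloss y p / 64)) <=
  expR (- (sqloss y m / 64)) *
    (1 - ((complex.Re y - complex.Re m) * (complex.Re m - complex.Re p) +
          (complex.Im y - complex.Im m) * (complex.Im m - complex.Im p)) / 32).
Proof.
case: y m p => [y1 y2] [m1 m2] [p1 p2]; rewrite /in_square /sqloss /=.
move=> [/andP[? ?] /andP[? ?]] [/andP[? ?] /andP[? ?]] [/andP[? ?] /andP[? ?]].
set b1 := y1 - m1; set b2 := y2 - m2; set d1 := m1 - p1; set d2 := m2 - p2.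
set u := b1 * d1 + b2 * d2.
have -> : y1 - p1 = b1 + d1 by rewrite /b1 /d1; ring.
have -> : y2 - p2 = b2 + d2 by rewrite /b2 /d2; ring.
have -> : - (((b1 + d1) ^+ 2 + (b2 + d2) ^+ 2) / 64) =
   - ((b1 ^+ 2 + b2 ^+ 2) / 64) + - (u / 32 + (d1 ^+ 2 + d2 ^+ 2) / 64).
  by rewrite /u; field.
rewrite expRD ler_wpM2l ?expR_ge0 //.
have hb1 : b1 ^+ 2 <= 4 by rewrite /b1; nra.
have hb2 : b2 ^+ 2 <= 4 by rewrite /b2; nra.
have hd1 : d1 ^+ 2 <= 4 by rewrite /d1; nra.
have hd2 : d2 ^+ 2 <= 4 by rewrite /d2; nra.
have cauchy_schwarz : u ^+ 2 <= (b1 ^+ 2 + b2 ^+ 2) * (d1 ^+ 2 + d2 ^+ 2).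
  have := sqr_ge0 (b1 * d2 - b2 * d1); rewrite /u; nra.
have u_sqr : u ^+ 2 <= 8 * (d1 ^+ 2 + d2 ^+ 2) by nra.
have u_le8 : u <= 8 by nra.
apply: expR_neg_le_1B; [lra | nra].
Qed.

End SquareLoss.

Section Logarithms.
Variable R : realType.

Lemma ln2_gt0 : 0 < ln (2 : R).
Proof. by rewrite ln_gt0 // ltr1n. Qed.

Lemma log2_expr2 (m : nat) : log2 ((2 : R) ^+ m) = m%:R.
Proof.
by rewrite /log2 lnXn // -[ln 2 *+ m]mulr_natr mulrAC divff ?mul1r ?lt0r_neq0 ?ln2_gt0.
Qed.

Lemma logp_ge0 (z : R) : 0 <= logp z.
Proof. by rewrite /logp; case: ifP => // z_ge1; rewrite divr_ge0 ?ln_ge0 ?ler1n. Qed.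

Lemma exists_expr2_gt (z : R) : exists k : nat, z < 2 ^+ k /\ k%:R <= logp z + 1.
Proof.
exists (Num.truncn (logp z)).+1; split; last first.
  by rewrite -addn1 natrD lerD2r truncn_le logp_ge0.
have [z_ge1|z_lt1] := leP 1 z; last first.
  by apply: lt_le_trans z_lt1 _; rewrite exprn_ege1 // ler1n.
have z_gt0 : 0 < z by apply: lt_le_trans z_ge1.
have := truncnS_gt (logp z); rewrite /logp z_ge1 /log2 ltr_pdivrMr ?ln2_gt0 //.
by move=> ?; rewrite -ltr_ln ?posrE ?exprn_gt0 // lnXn // -[ln 2 *+ _]mulr_natr mulrC.
Qed.

Lemma ln_sqrS_le (N : nat) : (2 <= N)%N ->
  ln ((N.+1 ^ 2)%:R : R) <= 4 * ln 2 * log2 N%:R.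
Proof.
move=> N_ge2; have N_gt0 : (0 < N)%N by apply: leq_trans N_ge2.
have -> : 4 * ln 2 * log2 N%:R = ln ((N ^ 4)%:R : R).
  rewrite natrX lnXn ?ltr0n // /log2 -mulr_natr.
  by field; apply: lt0r_neq0; apply: ln2_gt0.
rewrite ler_ln ?posrE ?ltr0n ?expn_gt0 ?N_gt0 // ler_nat.
by rewrite (_ : 4 = 2 * 2)%N // expnM leq_exp2r // expnS expn1; nia.
Qed.

End Logarithms.

Lemma ler_sum_mem (R : realType) (T : eqType) (U : seq T) (F : T -> R) x :
  (forall e, 0 <= F e) -> x \in U -> F x <= \sum_(e <- U) F e.
Proof. by move=> F_ge0 xU; rewrite (big_rem x) //= lerDl sumr_ge0. Qed.

Lemma wavg_itv (R : realType) (T : Type) (U : seq T) (q r : T -> R) :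
  (forall e, 0 <= q e) -> (forall e, -1 <= r e <= 1) -> 0 < \sum_(e <- U) q e ->
  -1 <= (\sum_(e <- U) q e * r e) / \sum_(e <- U) q e <= 1.
Proof.
move=> q_ge0 r_itv W_gt0; rewrite ler_pdivlMr // ler_pdivrMr // mulN1r mul1r.
apply/andP; split; [rewrite -sumrN|]; apply: ler_sum => e _;
  have /andP[r_ge r_le] := r_itv e.
  by rewrite -mulrN1 ler_wpM2l.
by rewrite -[X in _ <= X]mulr1 ler_wpM2l.
Qed.

Section Aggregation.
Variables (R : realType) (E : eqType).
Implicit Types (U : seq E) (q : E -> R) (p : E -> R[i]) (m : R[i]).

Definition is_wmean U q p m : Prop :=
  (\sum_(e <- U) q e) * complex.Re m = \sum_(e <- U) q e * complex.Re (p e) /\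
  (\sum_(e <- U) q e) * complex.Im m = \sum_(e <- U) q e * complex.Im (p e).

Definition wmean U q p : R[i] :=
  Complex ((\sum_(e <- U) q e * complex.Re (p e)) / \sum_(e <- U) q e)
          ((\sum_(e <- U) q e * complex.Im (p e)) / \sum_(e <- U) q e).

Lemma wmeanP U q p : 0 < \sum_(e <- U) q e -> is_wmean U q p (wmean U q p).
Proof. by move=> /lt0r_neq0 W_neq0; split; rewrite /= mulrC divfK. Qed.

Lemma wmean_in_square U q p : (forall e, 0 <= q e) -> 0 < \sum_(e <- U) q e ->
  (forall e, in_square (p e)) -> in_square (wmean U q p).
Proof.
by move=> q_ge0 W_gt0 p_sq; split; apply: wavg_itv => // e; case: (p_sq e).
Qed.

Lemma sum_weighted_cat U1 U2 q (a b : E -> R) (c : R) :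
  (\sum_(e <- U1) q e) * c = \sum_(e <- U1) q e * a e ->
  {in U1, b =1 a} -> {in U2, forall e, b e = c} ->
  (\sum_(e <- U1 ++ U2) q e) * c = \sum_(e <- U1 ++ U2) q e * b e.
Proof.
move=> mean1 ba bc; rewrite !big_cat /= mulrDl mean1 mulr_suml.
by congr (_ + _); rewrite !big_seq; apply: eq_bigr => e eU;
  [rewrite ba | rewrite bc].
Qed.

Lemma is_wmean_cat U1 U2 q p p1 m :
  is_wmean U1 q p1 m -> {in U1, p =1 p1} -> {in U2, forall e, p e = m} ->
  is_wmean (U1 ++ U2) q p m.
Proof.
move=> [meanRe meanIm] pp1 pm.
by split; [apply: (sum_weighted_cat meanRe) | apply: (sum_weighted_cat meanIm)];
  by [move=> e /pp1 -> | move=> e /pm ->].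
Qed.

Variables (w : E -> R) (pi : E -> nat -> R[i]) (y mu : nat -> R[i]).
Hypotheses (w_ge0 : forall e, 0 <= w e) (y_sq : forall n, in_square (y n))
  (mu_sq : forall n, in_square (mu n)) (pi_sq : forall e n, in_square (pi e n)).

Definition potential n e : R :=
  w e * expR (- ((\sum_(t < n) sqloss (y t) (pi e t)) / 64)).

Lemma potential_ge0 n e : 0 <= potential n e.
Proof. by rewrite mulr_ge0 ?expR_ge0. Qed.

Lemma potentialS n e :
  potential n.+1 e = potential n e * expR (- (sqloss (y n) (pi e n) / 64)).
Proof. by rewrite /potential big_ord_recr -mulrA -expRD mulrDl opprD. Qed.

Lemma sum_potentialS_le U n : is_wmean U (potential n) (pi^~ n) (mu n) ->
  \sum_(e <- U) potential n.+1 e <=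
  expR (- (sqloss (y n) (mu n) / 64)) * \sum_(e <- U) potential n e.
Proof.
move=> [meanRe meanIm].
set a := expR _; set Y1 := complex.Re (y n); set Y2 := complex.Im (y n).
set M1 := complex.Re (mu n); set M2 := complex.Im (mu n).
set q := potential n; set S := \sum_(e <- U) q e.
pose tangent e := a * (1 - ((Y1 - M1) * (M1 - complex.Re (pi e n)) +
                            (Y2 - M2) * (M2 - complex.Im (pi e n))) / 32).
apply: (@le_trans _ _ (\sum_(e <- U) q e * tangent e)).
  apply: ler_sum => e _; rewrite potentialS ler_wpM2l ?potential_ge0 //.
  exact: expR_sqloss_tangent.
(* The first-order terms of the tangents cancel because [mu n] is the mean. *)
have -> : \sum_(e <- U) q e * tangent e =
    a * (S - ((Y1 - M1) * (S * M1 - \sum_(e <- U) q e * complex.Re (pi e n)) +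
              (Y2 - M2) * (S * M2 - \sum_(e <- U) q e * complex.Im (pi e n))) / 32).
  rewrite (eq_bigr (fun e => (a * (1 - ((Y1 - M1) * M1 + (Y2 - M2) * M2) / 32)) * q e
      + (a * (Y1 - M1) / 32) * (q e * complex.Re (pi e n))
      + (a * (Y2 - M2) / 32) * (q e * complex.Im (pi e n)))); last first.
    by move=> e _; rewrite /tangent; ring.
  by rewrite !big_split /= -!mulr_sumr /S; ring.
by rewrite meanRe meanIm !subrr !mulr0 addr0 mul0r subr0.
Qed.

Lemma sum_potential_le U N :
  (forall n, (n < N)%N -> is_wmean U (potential n) (pi^~ n) (mu n)) ->
  \sum_(e <- U) potential N e <=
  expR (- ((\sum_(n < N) sqloss (y n) (mu n)) / 64)) * \sum_(e <- U) w e.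
Proof.
elim: N => [|N IH] mean.
  rewrite big_ord0 mul0r oppr0 expR0 mul1r le_eqVlt; apply/orP; left; apply/eqP.
  by apply: eq_bigr => e _; rewrite /potential big_ord0 mul0r oppr0 expR0 mulr1.
apply: (le_trans (sum_potentialS_le (mean N (ltnSn N)))).
have -> : expR (- ((\sum_(n < N.+1) sqloss (y n) (mu n)) / 64)) =
    expR (- (sqloss (y N) (mu N) / 64)) *
    expR (- ((\sum_(n < N) sqloss (y n) (mu n)) / 64)).
  by rewrite -expRD big_ord_recr /=; congr expR; lra.
rewrite -mulrA ler_wpM2l ?expR_ge0 //.
by apply: IH => n /ltnW; apply: mean.
Qed.

Lemma aggregating_bound U N e0 :
  (forall n, (n < N)%N -> is_wmean U (potential n) (pi^~ n) (mu n)) ->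
  e0 \in U -> 0 < w e0 ->
  \sum_(n < N) sqloss (y n) (mu n) <=
  \sum_(n < N) sqloss (y n) (pi e0 n) + 64 * (ln (\sum_(e <- U) w e) - ln (w e0)).
Proof.
move=> mean e0U w_gt0.
have W_gt0 : 0 < \sum_(e <- U) w e by apply: lt_le_trans w_gt0 (ler_sum_mem w_ge0 e0U).
have := le_trans (ler_sum_mem (potential_ge0 N) e0U) (sum_potential_le mean).
rewrite /potential -ler_ln ?posrE ?mulr_gt0 ?expR_gt0 //.
by rewrite !lnM ?posrE ?expR_gt0 // !expRK; lra.
Qed.

End Aggregation.

Section SupMetric.
Variables (R : realType) (X : topologicalType).
Implicit Types (f g h : X -> R[i]) (U : set (X -> R[i])).

Lemma CX_diff_has_ubound f g :
  CX f -> CX g -> has_ubound [set cmod (f x - g x) | x in [set: X]].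
Proof.
move=> [_ [_ [B1 fB1]]] [_ [_ [B2 gB2]]]; exists (B1 + B2) => _ [x _ <-].
apply: le_trans (cmodD _ _) _; apply: lerD; first exact: fB1.
by rewrite /cmod normcN; exact: gB2.
Qed.

Lemma cmod_le_supdist f g x : CX f -> CX g -> cmod (f x - g x) <= supdist f g.
Proof.
by move=> CXf CXg; apply: ub_le_sup; [exact: CX_diff_has_ubound | exists x].
Qed.

Lemma supdist_set0 f g :
  ~ ([set cmod (f x - g x) | x in [set: X]] !=set0) -> supdist f g = 0.
Proof.
move=> empty; rewrite /supdist (_ : [set _ | x in _] = set0) ?sup0 //.
by rewrite -subset0 => r ?; apply: empty; exists r.
Qed.

Lemma supdist_le f g (b : R) :
  0 <= b -> (forall x, cmod (f x - g x) <= b) -> supdist f g <= b.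
Proof.
move=> b_ge0 fgb.
have [ne|/supdist_set0 -> //] := pselect ([set cmod (f x - g x) | x in [set: X]] !=set0).
by apply: ge_sup => // _ [x _ <-].
Qed.

Lemma supdist_ge0 f g : CX f -> CX g -> 0 <= supdist f g.
Proof.
move=> CXf CXg.
have [[r [x _ _]]|/supdist_set0 -> //] :=
  pselect ([set cmod (f x - g x) | x in [set: X]] !=set0).
exact: le_trans (cmod_ge0 _) (cmod_le_supdist x CXf CXg).
Qed.

Lemma supdistC f g : supdist f g = supdist g f.
Proof.
rewrite /supdist; congr sup.
by apply/seteqP; split=> _ [x _ <-]; exists x; rewrite // cmodB.
Qed.

Lemma supdist_triangle f g h :
  CX f -> CX g -> CX h -> supdist f h <= supdist f g + supdist g h.
Proof.
move=> CXf CXg CXh; apply: supdist_le => [|x]; first by rewrite addr_ge0 ?supdist_ge0.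
rewrite -(subrKA (g x)); apply: le_trans (cmodD _ _) _.
by apply: lerD; apply: cmod_le_supdist.
Qed.

Lemma supdist_xx_le0 f : supdist f f <= 0.
Proof.
by apply: supdist_le => // x; rewrite subrr /cmod ComplexField.Normc.normc0.
Qed.

Lemma sup_compact_has_net U f0 (eps : R) :
  sup_compact U -> U f0 -> 0 < eps -> exists n, has_net U eps n.
Proof.
move=> [U_CX cover] Uf0 eps_gt0.
pose ball f := [set g | U f /\ CX g /\ supdist f g < eps].
have ball_open f : sup_open (ball f).
  split=> [g [_ []] //|g [Uf [CXg dfg]]].
  exists (eps - supdist f g) => [|h CXh dgh]; first by rewrite subr_gt0.
  split=> //; split=> //; apply: le_lt_trans (supdist_triangle (U_CX f Uf) CXg CXh) _.
  by rewrite -ltrBrDl.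
have U_covered : U `<=` \bigcup_(f in [set: X -> R[i]]) ball f.
  move=> g Ug; exists g => //; split=> //; split; first exact: U_CX.
  exact: le_lt_trans (supdist_xx_le0 g) eps_gt0.
have [n [G UG]] := cover _ ball ball_open U_covered.
exists n, (fun k => if pselect (U (G k)) then G k else f0); split.
  by move=> k; case: pselect.
move=> f Uf; have [k _ [UGk [_ dGf]]] := UG f Uf.
by exists k; destruct pselect; rewrite // supdistC ltW.
Qed.

Lemma entropy_le_has_net U f0 (eps b : R) :
  (exists n, has_net U eps n) -> U f0 -> entropy U eps <= b ->
  exists n, [/\ (0 < n)%N, has_net U eps n & ln (n%:R : R) <= b * ln 2].
Proof.
move=> [m netm] Uf0 Hb.
have [n [netn n_min]] := @nat_has_minimum [set n | has_net U eps n] (ex_intro _ m netm).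
have n_gt0 : (0 < n)%N.
  by case: n netn {n_min} => // -[g [_ /(_ f0 Uf0) [[]]]].
exists n; split=> //.
set S := [set (k%:R : R) | k in [set k | has_net U eps k]].
have inf_S : inf S = n%:R.
  apply/le_anti/andP; split.
    apply: ge_inf; last by exists n.
    by exists n%:R => _ [k netk <-]; rewrite ler_nat; apply: n_min.
  apply: lb_le_inf; first by exists n%:R, n.
  by move=> _ [k netk <-]; rewrite ler_nat; apply: n_min.
by move: Hb; rewrite /entropy /log2 -/S inf_S ler_pdivrMr // ln2_gt0.
Qed.

End SupMetric.

Definition net_radius (R : realType) (t : nat) : R := ((2 : R) ^+ t.+1)^-1.

Section UnitBallNets.
Variables (R : realType) (X : topologicalType).
Variables (Fs : set (X -> R[i])) (nF : (X -> R[i]) -> R) (L M : R).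
Hypothesis Fs_embedded : banach_compact_embedded Fs nF.
Hypothesis entropy_le : forall eps : R, 0 < eps -> eps <= 2^-1 ->
  entropy (unit_ball Fs nF) eps <= L * (log2 eps^-1) `^ M.

Lemma unit_ball0 : unit_ball Fs nF (fun _ => 0).
Proof.
have [_ [Fs0 [_ [_ [nF_def _]]]]] := Fs_embedded.
by split=> //; have [_ [_ ->]] := nF_def _ Fs0.
Qed.

Definition is_ball_net t (n : nat) (G : nat -> X -> R[i]) : Prop :=
  [/\ (0 < n)%N,
      forall i, (i < n)%N -> unit_ball Fs nF (G i),
      forall f, unit_ball Fs nF f ->
        exists2 i, (i < n)%N & supdist f (G i) <= net_radius R t
    & ln (n%:R : R) <= L * (t.+1)%:R `^ M * ln 2].

Lemma unit_ball_net t : exists n G, is_ball_net t n G.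
Proof.
have [_ [_ [_ [_ [_ [_ [_ [_ ball_compact]]]]]]]] := Fs_embedded.
have r_gt0 : 0 < net_radius R t by rewrite invr_gt0 exprn_gt0.
have r_le : net_radius R t <= 2^-1.
  rewrite lef_pV2 ?posrE ?exprn_gt0 // exprS -[X in X <= _]mulr1.
  by rewrite ler_wpM2l // exprn_ege1 // ler1n.
have := entropy_le r_gt0 r_le; rewrite invrK log2_expr2 => Hent.
have [n [n_gt0 [G [GU Gnet]] ln_n]] :=
  entropy_le_has_net (sup_compact_has_net ball_compact unit_ball0 r_gt0) unit_ball0 Hent.
exists n, (fun i => G (insubd (Ordinal n_gt0) i)); split=> //.
  by move=> i _; exact: GU.
by move=> f /Gnet[k dk]; exists (val k); [exact: ltn_ord | rewrite valKd].
Qed.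

Lemma unit_ball_nets : exists s g, forall t, is_ball_net t (s t) (g t).
Proof.
have /choice[sg sgP] :
    forall t, exists p : nat * (nat -> X -> R[i]), is_ball_net t p.1 p.2.
  by move=> t; have [n [G ?]] := unit_ball_net t; exists (n, G).
by exists (fun t => (sg t).1), (fun t => (sg t).2).
Qed.

End UnitBallNets.

(* An expert [(t, k, i)] enters at round [t] and predicts with [2 ^ k] times the
   [i]-th element of the [net_radius t]-net of the unit ball; [s t] is the size
   of that net. *)
Definition cohort (s : nat -> nat) (t : nat) : seq (nat * nat * nat) :=
  [seq (t, k, i) | k <- iota 0 t.+1, i <- iota 0 (s t)].

Definition experts (s : nat -> nat) (n : nat) : seq (nat * nat * nat) :=
  flatten [seq cohort s t | t <- iota 0 n.+1].

Definition prior (R : realType) (s : nat -> nat) (e : nat * nat * nat) : R :=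
  ((s e.1.1)%:R)^-1.

Lemma sum_iota_cst (R : realType) (m : nat) (c : R) :
  \sum_(i <- iota 0 m) c = m%:R * c.
Proof. by rewrite big_const_seq count_predT size_iota iter_addr_0 mulr_natl. Qed.

Section Experts.
Variable s : nat -> nat.

Lemma experts_split n N : (n <= N)%N ->
  experts s N = experts s n ++ flatten [seq cohort s t | t <- iota n.+1 (N - n)].
Proof.
move=> le_nN; rewrite /experts -flatten_cat -map_cat.
by rewrite -(add0n n.+1) -iotaD add0n addSn subnKC.
Qed.

Lemma mem_cohort t e : e \in cohort s t -> e.1.1 = t.
Proof. by move=> /allpairsP[[k i] [_ _ ->]]. Qed.

Lemma mem_experts N t k i : (t <= N)%N -> (k <= t)%N -> (i < s t)%N ->
  (t, k, i) \in experts s N.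
Proof.
move=> le_tN le_kt lt_is; apply/flatten_mapP; exists t; first by rewrite mem_iota.
by apply/allpairsP; exists (k, i); rewrite !mem_iota.
Qed.

Lemma experts_entry_le n e : e \in experts s n -> (e.1.1 <= n)%N.
Proof.
by move=> /flatten_mapP[t]; rewrite mem_iota => /andP[_ ?] /mem_cohort ->.
Qed.

Lemma cohorts_entry_ge a b e :
  e \in flatten [seq cohort s t | t <- iota a b] -> (a <= e.1.1)%N.
Proof.
by move=> /flatten_mapP[t]; rewrite mem_iota => /andP[? _] /mem_cohort ->.
Qed.

(* Each cohort [t] carries total prior weight [t + 1]. *)
Lemma sum_prior_experts (R : realType) N : (forall t, (0 < s t)%N) ->
  \sum_(e <- experts s N) prior R s e <= (N.+1 ^ 2)%:R.
Proof.
move=> s_gt0; rewrite /experts big_flatten big_map.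
rewrite (eq_bigr (fun t => (t.+1)%:R)) => [|t _]; last first.
  rewrite /cohort big_allpairs_dep (eq_bigr (fun k => 1)) => [|k _].
    by rewrite sum_iota_cst mulr1.
  rewrite (eq_bigr (fun _ => ((s t)%:R)^-1)) // sum_iota_cst.
  by rewrite divff // pnatr_eq0 -lt0n.
apply: (@le_trans _ _ (\sum_(t <- iota 0 N.+1) (N.+1)%:R)).
  by rewrite !big_seq; apply: ler_sum => t; rewrite mem_iota ler_nat.
by rewrite sum_iota_cst natrX -expr2.
Qed.

End Experts.

Section Clip.
Variable R : realType.

Definition clip1 (r : R) : R := Num.max (-1) (Num.min 1 r).

Definition clipc (z : R[i]) : R[i] :=
  Complex (clip1 (complex.Re z)) (clip1 (complex.Im z)).

Lemma clip1_cases r :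
  [\/ clip1 r = r /\ -1 <= r <= 1, clip1 r = 1 /\ 1 < r | clip1 r = -1 /\ r < -1].
Proof.
rewrite /clip1; have [r_le1|r_gt1] := leP r 1; last first.
  by constructor 2; rewrite max_r //; lra.
have [_|_] := leP (-1) r; last by constructor 3.
by constructor 1.
Qed.

Lemma clip1_itv r : -1 <= clip1 r <= 1.
Proof. by case: (clip1_cases r) => -[-> ?] //; apply/andP; split; lra. Qed.

Lemma clipc_in_square z : in_square (clipc z).
Proof. by split; apply: clip1_itv. Qed.

(* Clipping to [-1, 1] never moves a prediction away from an outcome in [-1, 1]. *)
Lemma sqr_clip1_le (y f h d : R) : -1 <= y <= 1 -> `|f - h| <= d -> d <= 1 ->
  (y - clip1 h) ^+ 2 <= (y - f) ^+ 2 + 7 * d.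
Proof.
move=> /andP[y_ge y_le] fh_le d_le1.
have d_ge0 : 0 <= d by exact: le_trans (normr_ge0 _) fh_le.
move: fh_le; rewrite ler_norml => /andP[fh_ge fh_le].
have sqrB c : (y - c) ^+ 2 = (y - f) ^+ 2 + 2 * (y - f) * (f - c) + (f - c) ^+ 2.
  by ring.
case: (clip1_cases h) => -[-> h_itv]; rewrite sqrB;
  [nra | case: (leP 1 f) => ?; nra | case: (leP f (-1)) => ?; nra].
Qed.

Lemma sqloss_clipc_le (y a b : R[i]) (d : R) :
  in_square y -> cmod (a - b) <= d -> d <= 1 ->
  sqloss y (clipc b) <= cmod (y - a) ^+ 2 + 14 * d.
Proof.
move=> [y_re y_im] ab_le d_le1; rewrite sqr_cmodB /sqloss.
move: ab_le (normr_Re_le_cmod (a - b)) (normr_Im_le_cmod (a - b)).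
case: a b => [a1 a2] [b1 b2] /= ab_le re_le im_le.
have := sqr_clip1_le y_re (le_trans re_le ab_le) d_le1.
have := sqr_clip1_le y_im (le_trans im_le ab_le) d_le1.
lra.
Qed.

End Clip.

Section AggregatingStrategy.
Variables (R : realType) (X : Type) (s : nat -> nat) (g : nat -> nat -> X -> R[i]).
Hypothesis s_gt0 : forall t, (0 < s t)%N.
Implicit Types (xs : nat -> X) (ys mu : nat -> R[i]).

Definition expert_pred (e : nat * nat * nat) (x : X) : R[i] :=
  clipc ((2 ^+ e.1.2 : R)%:C%C * g e.1.1 e.2 x).

(* Before it enters, an expert copies the master's prediction [mu]: this makes
   the master's prediction a weighted mean over any set of experts containing
   the ones that already entered. *)
Definition expert_moves xs mu (e : nat * nat * nat) (t : nat) : R[i] :=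
  if (e.1.1 <= t)%N then expert_pred e (xs t) else mu t.

Definition aa_pred n xs ys mu (x : X) : R[i] :=
  wmean (experts s n) (potential (prior R s) (expert_moves xs mu) ys n)
        (expert_pred ^~ x).

Fixpoint aa_moves xs ys n : seq R[i] :=
  if n is n'.+1 then
    let mu := aa_moves xs ys n' in rcons mu (aa_pred n' xs ys (nth 0 mu) (xs n'))
  else [::].

Definition aa_move xs ys n : R[i] := nth 0 (aa_moves xs ys n.+1) n.

Lemma aa_pred_ext n xs xs' ys ys' mu mu' x :
  (forall t, (t < n)%N -> [/\ xs t = xs' t, ys t = ys' t & mu t = mu' t]) ->
  aa_pred n xs ys mu x = aa_pred n xs' ys' mu' x.
Proof.
move=> same; rewrite /aa_pred /potential; congr wmean; apply: funext => e.
congr (_ * expR (- (_ / 64))); apply: eq_bigr => t _; rewrite /expert_moves.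
by have [-> -> ->] := same t (ltn_ord t).
Qed.

Lemma size_aa_moves xs ys n : size (aa_moves xs ys n) = n.
Proof. by elim: n => //= n IH; rewrite size_rcons IH. Qed.

Lemma aa_moves_ext xs xs' ys ys' n :
  (forall t, (t < n)%N -> xs t = xs' t) -> (forall t, (t.+1 < n)%N -> ys t = ys' t) ->
  aa_moves xs ys n = aa_moves xs' ys' n.
Proof.
elim: n => //= n IH same_x same_y.
rewrite IH => [| t /ltnW | t /ltnW]; [|exact: same_x|exact: same_y].
rewrite (same_x n (ltnSn n)); congr rcons; apply: aa_pred_ext => t lt_tn.
by split=> //; [apply: same_x; apply: ltnW | apply: same_y].
Qed.

Lemma nth_aa_moves xs ys n t :
  (t < n)%N -> nth 0 (aa_moves xs ys n) t = aa_move xs ys t.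
Proof.
elim: n => // n IH lt_tn; rewrite /= nth_rcons size_aa_moves.
case: (ltngtP t n) => [/IH //|| ->]; first by rewrite ltnNge -ltnS lt_tn.
by rewrite /aa_move /= nth_rcons size_aa_moves ltnn eqxx.
Qed.

Lemma aa_moveE xs ys n : aa_move xs ys n = aa_pred n xs ys (aa_move xs ys) (xs n).
Proof.
rewrite /aa_move /= nth_rcons size_aa_moves ltnn eqxx.
by apply: aa_pred_ext => t lt_tn; split=> //; apply: nth_aa_moves.
Qed.

Lemma sum_potential_gt0 n xs ys mu :
  0 < \sum_(e <- experts s n) potential (prior R s) (expert_moves xs mu) ys n e.
Proof.
have prior_gt0 e : 0 < prior R s e by rewrite invr_gt0 ltr0n.
apply: lt_le_trans (ler_sum_mem _ (mem_experts (s:=s) (t:=0) (k:=0) (i:=0) _ _ _)) => //.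
- by rewrite mulr_gt0 ?expR_gt0.
- by move=> e; apply: potential_ge0 => {}e; apply: ltW.
Qed.

Lemma aa_move_in_square xs ys n : in_square (aa_move xs ys n).
Proof.
rewrite aa_moveE; apply: wmean_in_square => [e||e]; last exact: clipc_in_square.
  by apply: potential_ge0 => {}e; rewrite invr_ge0 ler0n.
exact: sum_potential_gt0.
Qed.

Lemma expert_moves_in_square xs ys e t :
  in_square (expert_moves xs (aa_move xs ys) e t).
Proof.
by rewrite /expert_moves; case: ifP => _; [exact: clipc_in_square | exact: aa_move_in_square].
Qed.

Lemma aa_move_is_wmean xs ys N n : (n <= N)%N ->
  let mu := aa_move xs ys in
  is_wmean (experts s N) (potential (prior R s) (expert_moves xs mu) ys n)
           ((expert_moves xs mu)^~ n) (mu n).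
Proof.
move=> le_nN mu; rewrite (experts_split s le_nN).
apply: (@is_wmean_cat _ _ _ _ _ _ (expert_pred ^~ (xs n))).
- by rewrite {2}/mu aa_moveE; apply: wmeanP; exact: sum_potential_gt0.
- by move=> e /experts_entry_le le_en; rewrite /expert_moves le_en.
- by move=> e /cohorts_entry_ge lt_ne; rewrite /expert_moves leqNgt lt_ne.
Qed.

End AggregatingStrategy.

(* A strategy only sees the past pairs (x, y): the master's past predictions
   are recomputed from them. *)
Definition aa_strategy (R : realType) (X : topologicalType) (s : nat -> nat)
    (g : nat -> nat -> X -> R[i]) : strategy R X :=
  fun hist x =>
    let n := size hist in
    let xs t := if (t < n)%N then (nth (x, 0) hist t).1 else x in
    let ys t := (nth (x, 0) hist t).2 in
    nth 0 (aa_moves s g xs ys n.+1) n.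

Lemma pred_move_aa (R : realType) (X : topologicalType) s (g : nat -> nat -> X -> R[i])
    (x : nat -> X) (y : nat -> R[i]) n :
  pred_move (aa_strategy s g) x y n = aa_move s g x y n.
Proof.
rewrite /pred_move /aa_strategy /aa_move size_map size_iota.
have nth_hist t : (t < n)%N ->
    nth (x n, 0) [seq (x k, y k) | k <- iota 0 n] t = (x t, y t).
  by move=> lt_tn; rewrite (nth_map 0%N) ?size_iota // nth_iota.
congr nth; apply: aa_moves_ext => t; last first.
  by rewrite ltnS => /nth_hist ->.
move=> lt_tSn; case: (ltnP t n) => [lt_tn | le_nt]; first by rewrite nth_hist.
by have -> : t = n by apply/eqP; rewrite eqn_leq le_nt andbT -ltnS.
Qed.

Lemma sum_ltn_cst (R : realType) (N t : nat) (c : R) : 0 <= c ->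
  \sum_(n < N) (if (n < t)%N then c else 0) <= t%:R * c.
Proof.
move=> c_ge0.
suff -> : \sum_(n < N) (if (n < t)%N then c else 0) = (minn N t)%:R * c.
  by rewrite ler_wpM2r // ler_nat geq_minr.
elim: N => [|N IH]; first by rewrite big_ord0 min0n mul0r.
rewrite big_ord_recr /= IH; case: ifP => lt_Nt.
  have -> : minn N.+1 t = (minn N t).+1 by lia.
  by rewrite -addn1 natrD mulrDl mul1r.
have -> : minn N.+1 t = minn N t by lia.
by rewrite addr0.
Qed.

Lemma regret_penalty_le (R : realType) (L M a b : R) (k j N : nat) :
  1 <= L -> 1 <= M -> 0 <= a -> 1 <= b -> k%:R <= a + 1 -> j%:R <= b + 1 ->
  ln ((N.+1 ^ 2)%:R : R) <= 4 * ln 2 * b ->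
  7 + 8 * (k + j)%N%:R + 64 * (ln ((N.+1 ^ 2)%:R) + L * (k + j)%N.+1%:R `^ M * ln 2)
  <= (300 + 64 * 4 `^ M) * L * (a + b) `^ M.
Proof.
move=> L_ge1 M_ge1 a_ge0 b_ge1 k_le j_le lnN_le.
set A := a + b; have A_ge1 : 1 <= A by rewrite /A; lra.
have ln2_le1 : ln (2 : R) <= 1 by have := @le_ln1Dx R 1 ltac:(lra); rewrite -[1 + 1]/2.
have kj_le : ((k + j)%N.+1)%:R <= 4 * A by rewrite -addn1 !natrD /A; lra.
have A_le : A <= A `^ M by apply: le1r_powR.
set P := A `^ M in A_le *.
have Q_ge0 : 0 <= 4 `^ M :> R by apply: powR_ge0.
have kj_pow : ((k + j)%N.+1)%:R `^ M <= 4 `^ M * P.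
  rewrite /P -powRM ?ler0n //; last by lra.
  by apply: ge0_ler_powR => //; [lra | rewrite nnegrE ler0n | rewrite nnegrE; lra].
set Q := 4 `^ M in Q_ge0 kj_pow *; set T := _ `^ M in kj_pow *.
have T_ge0 : 0 <= T by apply: powR_ge0.
have entry_term : L * T * ln 2 <= L * Q * P.
  apply: le_trans (_ : L * T <= _); first by rewrite ler_piMr ?mulr_ge0 //; lra.
  by rewrite -mulrA ler_wpM2l //; lra.
have lnN_le4A : ln ((N.+1 ^ 2)%:R : R) <= 4 * A.
  by apply: le_trans lnN_le _; rewrite /A; nra.
have kj_le4A : ((k + j)%N)%:R <= 4 * A by move: kj_le; rewrite -addn1 natrD; lra.
have P_le : P <= L * P by nra.
have LQP_ge0 : 0 <= L * Q * P by rewrite !mulr_ge0 //; lra.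
have -> : (300 + 64 * Q) * L * P = 300 * (L * P) + 64 * (L * Q * P) by ring.
nra.
Qed.

Section Regret.
Variables (R : realType) (X : topologicalType).
Variables (Fs : set (X -> R[i])) (nF : (X -> R[i]) -> R) (L M : R).
Variables (s : nat -> nat) (g : nat -> nat -> X -> R[i]).
Hypothesis Fs_embedded : banach_compact_embedded Fs nF.
Hypothesis nets : forall t, is_ball_net Fs nF L M t (s t) (g t).

Lemma net_size_gt0 t : (0 < s t)%N.
Proof. by case: (nets t). Qed.

Lemma scaled_net_approx F k t : Fs F -> nF F <= 2 ^+ k ->
  exists2 i, (i < s t)%N &
    forall x, cmod (F x - (2 ^+ k : R)%:C%C * g t i x) <= 2 ^+ k * net_radius R t.
Proof.
have [Fs_CX [_ [_ [FsZ [_ [nFZ _]]]]]] := Fs_embedded.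
move=> FsF nF_le; have [_ g_ball g_net _] := nets t.
have p2k : 0 < (2 : R) ^+ k by rewrite exprn_gt0.
pose c : R[i] := (((2 : R) ^+ k)^-1)%:C%C; pose Fk x := c * F x.
have FsFk : Fs Fk by apply: FsZ.
have [|i lt_is dFk] := g_net Fk.
  split=> //; rewrite nFZ // cmod_real ger0_norm; last by rewrite invr_ge0 ltW.
  by rewrite mulrC ler_pdivrMr // mul1r.
exists i => // x.
have -> : F x - (2 ^+ k : R)%:C%C * g t i x = (2 ^+ k : R)%:C%C * (Fk x - g t i x).
  by rewrite mulrBr /Fk /c mulrA -rmorphM divff ?lt0r_neq0 // rmorph1 mul1r.
rewrite cmodM cmod_real ger0_norm ?(ltW p2k) // ler_pM2l //.
apply: le_trans dFk; apply: cmod_le_supdist; first exact: Fs_CX.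
by apply: Fs_CX; case: (g_ball i lt_is).
Qed.

(* From round [t] on, the expert [(t, k, i)] is [14 d]-close to [F] in loss;
   before, it pays at most [8] per round. *)
Lemma expert_regret (x : nat -> X) (y mu : nat -> R[i]) F N t k i (d : R) :
  (0 < N)%N -> (forall n, in_square (y n)) -> (forall n, in_square (mu n)) ->
  (forall x', cmod (F x' - (2 ^+ k : R)%:C%C * g t i x') <= d) -> N%:R * d <= 2^-1 ->
  \sum_(n < N) sqloss (y n) (expert_moves g x mu (t, k, i) n) <=
  \sum_(n < N) cmod (y n - F (x n)) ^+ 2 + 7 + 8 * t%:R.
Proof.
move=> N_gt0 y_sq mu_sq Fd Nd_le.
have d_ge0 : 0 <= d by apply: le_trans (Fd (x 0%N)); apply: cmod_ge0.
have d_le1 : d <= 1.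
  have : d <= N%:R * d by rewrite ler_peMl // ler1n.
  lra.
apply: (@le_trans _ _ (\sum_(n < N) (cmod (y n - F (x n)) ^+ 2 + 14 * d +
                                    (if (n < t)%N then 8 else 0)))).
  apply: ler_sum => n _; rewrite /expert_moves /=; case: ltnP => _.
    have := sqloss_le8 (y_sq n) (mu_sq n); have := sqr_ge0 (cmod (y n - F (x n))).
    lra.
  by rewrite addr0; apply: sqloss_clipc_le.
rewrite !big_split /= sumr_const card_ord -mulr_natr.
have := sum_ltn_cst N t (ler0n R 8); lra.
Qed.

Lemma aa_regret_expert (x : nat -> X) (y : nat -> R[i]) F N k t :
  0 <= L -> (2 <= N)%N -> Fs F -> (forall n, in_square (y n)) ->
  nF F <= 2 ^+ k -> (k <= t)%N -> N%:R * (2 ^+ k * net_radius R t) <= 2^-1 ->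
  \sum_(n < N) sqloss (y n) (aa_move s g x y n) <=
  \sum_(n < N) cmod (y n - F (x n)) ^+ 2 + 7 + 8 * t%:R +
     64 * (ln ((N.+1 ^ 2)%:R) + L * (t.+1)%:R `^ M * ln 2).
Proof.
move=> L_ge0 N_ge2 FsF y_sq nF_le le_kt Nd_le.
have penalty_ge0 : 0 <= 64 * (ln ((N.+1 ^ 2)%:R) + L * (t.+1)%:R `^ M * ln 2).
  rewrite mulr_ge0 // addr_ge0 ?ln_ge0 ?ler1n ?expn_gt0 //.
  apply: mulr_ge0; last exact: ltW (ln2_gt0 R).
  by apply: mulr_ge0 => //; apply: powR_ge0.
have loss_ge0 : 0 <= \sum_(n < N) cmod (y n - F (x n)) ^+ 2.
  by apply: sumr_ge0 => n _; apply: sqr_ge0.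
have mu_sq := aa_move_in_square g net_size_gt0 x y.
have [lt_Nt|le_tN] := ltnP N t.
  apply: (@le_trans _ _ (\sum_(n < N) (8 : R))).
    by apply: ler_sum => n _; apply: sqloss_le8.
  rewrite sumr_const card_ord -mulr_natl.
  have : (N%:R : R) <= t%:R by rewrite ler_nat ltnW.
  lra.
have [i lt_is Fi] := scaled_net_approx t FsF nF_le.
have prior_gt0 e : 0 < prior R s e by rewrite invr_gt0 ltr0n net_size_gt0.
have mean n : (n < N)%N -> is_wmean (experts s N)
    (potential (prior R s) (expert_moves g x (aa_move s g x y)) y n)
    ((expert_moves g x (aa_move s g x y))^~ n) (aa_move s g x y n).
  by move=> /ltnW; exact: (aa_move_is_wmean g net_size_gt0 x y).
apply: le_trans (aggregating_bound (fun e => ltW (prior_gt0 e)) y_sq mu_sq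
  (expert_moves_in_square g net_size_gt0 x y) mean
  (mem_experts le_tN le_kt lt_is) (prior_gt0 _)) _.
have -> : - ln (prior R s (t, k, i)) = ln ((s t)%:R).
  by rewrite lnV ?opprK ?posrE ?ltr0n ?net_size_gt0.
have [_ _ _ ln_st] := nets t.
have expert_loss := expert_regret x (ltnW N_ge2) y_sq mu_sq Fi Nd_le.
have prior_mass_gt0 : 0 < \sum_(e <- experts s N) prior R s e.
  apply: lt_le_trans (prior_gt0 (t, k, i)) (ler_sum_mem _ (mem_experts le_tN le_kt lt_is)).
  by move=> e; apply: ltW.
have ln_prior_mass : ln (\sum_(e <- experts s N) prior R s e) <= ln ((N.+1 ^ 2)%:R).
  rewrite ler_ln ?posrE ?ltr0n ?expn_gt0 //; exact: sum_prior_experts net_size_gt0.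
lra.
Qed.

(* The expert used has scale [2 ^ k >= nF F] and precision [t = k + j] with
   [2 ^ j > N], so that its accumulated approximation error is at most 7. *)
Lemma aa_regret (x : nat -> X) (y : nat -> R[i]) F N :
  1 <= L -> 1 <= M -> (2 <= N)%N -> Fs F -> (forall n, cmod (y n) <= 1) ->
  \sum_(n < N) cmod (y n - aa_move s g x y n) ^+ 2 <=
  \sum_(n < N) cmod (y n - F (x n)) ^+ 2 +
    (300 + 64 * 4 `^ M) * L * (logp (nF F) + log2 N%:R) `^ M.
Proof.
move=> L_ge1 M_ge1 N_ge2 FsF y_le1.
have N_ge1 : (1 : R) <= N%:R by rewrite ler1n ltnW.
have log2N_ge1 : 1 <= log2 (N%:R : R).
  rewrite /log2 ler_pdivlMr ?ln2_gt0 // mul1r.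
  by rewrite ler_ln ?posrE ?ler_nat ?ltr0n ?(ltnW N_ge2).
have [k [nF_lt k_le]] := exists_expr2_gt (nF F).
have [j [N_lt j_le]] := exists_expr2_gt (N%:R : R).
rewrite /logp N_ge1 in j_le.
have Nd_le : N%:R * (2 ^+ k * net_radius R (k + j)) <= 2^-1.
  have -> : (2 : R) ^+ k * net_radius R (k + j) = (2 * 2 ^+ j)^-1.
    rewrite /net_radius exprS exprD mulrA [2 * 2 ^+ k]mulrC -mulrA invfM mulrA.
    by rewrite divff ?mul1r // expf_neq0.
  rewrite ler_pdivrMr ?mulr_gt0 ?exprn_gt0 // mulrA mulVf ?mul1r ?ltW //.
have -> : \sum_(n < N) cmod (y n - aa_move s g x y n) ^+ 2 =
           \sum_(n < N) sqloss (y n) (aa_move s g x y n).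
  by apply: eq_bigr => n _; apply: sqr_cmodB.
apply: le_trans (aa_regret_expert x (le_trans ler01 L_ge1) N_ge2 FsF
  (fun n => cmod_le1_in_square (y_le1 n)) (ltW nF_lt) (leq_addr j k) Nd_le) _.
rewrite -2!addrA lerD2l addrA.
by apply: regret_penalty_le; rewrite ?logp_ge0 ?ln_sqrS_le.
Qed.
End Regret.

Unset Implicit Arguments.

Theorem mainTheorem10 (R : realType) :
  exists C : R -> R,
  forall (X : topologicalType) (Fs : set (X -> R[i])) (nF : (X -> R[i]) -> R)
         (L M : R),
    inhabited X ->
    banach_compact_embedded Fs nF ->
    1 <= L -> 1 <= M ->
    (forall eps : R, 0 < eps -> eps <= 2^-1 ->
       entropy (unit_ball Fs nF) eps <= L * (log2 eps^-1) `^ M) ->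
    exists S : strategy R X,
      forall (N : nat), (2 <= N)%N ->
      forall (F : X -> R[i]), Fs F ->
      forall (x : nat -> X) (y : nat -> R[i]), (forall n, cmod (y n) <= 1) ->
        \sum_(n < N) cmod (y n - pred_move S x y n) ^+ 2
        <= \sum_(n < N) cmod (y n - F (x n)) ^+ 2
           + C M * L * (logp (nF F) + log2 N%:R) `^ M.
Proof.
exists (fun M => 300 + 64 * 4 `^ M).
move=> X Fs nF L M _ Fs_embedded L_ge1 M_ge1 entropy_le.
have [s [g nets]] := unit_ball_nets Fs_embedded entropy_le.
exists (aa_strategy s g) => N N_ge2 F FsF x y y_le1.
under eq_bigr do rewrite pred_move_aa.
exact: aa_regret Fs_embedded nets x y F N L_ge1 M_ge1 N_ge2 FsF y_le1.
Qed.
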